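(* Let $\Sigma$ be a finite alphabet, $S\in\Sigma^m$, and $a,a'\in\Sigma^m$ with $\mathrm{rep}_{\mathrm{Foc}(S)}(a)=\mathrm{rep}_{\mathrm{Foc}(S)}(a')$. Then $f^S_{\mathrm{BOM}}(a)=f^S_{\mathrm{BOM}}(a')$ and $g^S_{\mathrm{BOM}}(a)=g^S_{\mathrm{BOM}}(a')$.
   Context: For $S=s_0\cdots s_{m-1}$ let $p=p_1\cdots p_m=S^{\mathrm{rev}}$. The factor oracle of $p$ is the deterministic automaton with states $0,\dots,m$, start state $0$, built as follows: set $\mathrm{sl}(0)=-1$; for $i=1,\dots,m$: add transition $i-1\xrightarrow{p_i} i$; let $k=\mathrm{sl}(i-1)$; while $k\ne-1$ and $k$ has no transition labelled $p_i$, add $k\xrightarrow{p_i} i$ and set $k=\mathrm{sl}(k)$; then $\mathrm{sl}(i)=-1$ if $k=-1$, else the target of $k$'s transition labelled $p_i$. Missing transitions lead to a sink FAIL. $\mathrm{Foc}(S)$ is the set of $x\in\Sigma^*$ such that the factor oracle is not in FAIL after reading $x^{\mathrm{rev}}$, and $\mathrm{rep}_{\mathrm{Foc}(S)}(a)$ is the longest suffix of $a$ (including $\varepsilon$) in $\mathrm{Foc}(S)$. For a window $w=w_0\cdots w_{m-1}$, the oracle reads $w_{m-1},w_{m-2},\dots$; let $k^S_w$ be the number of transitions made before entering FAIL (excluding the transition into FAIL). Cost: $f^S_{\mathrm{BOM}}(w)=m$ if $w=S$, else $k^S_w+1$. Shift: $g^S_{\mathrm{BOM}}(w)=1$ if $w=S$,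 else $m-k^S_w$. *)

From mathcomp Require Import all_boot.
Set Implicit Arguments. Unset Strict Implicit. Unset Printing Implicit Defensive.

Section FactorOracle.
Variable T : finType.

(* A transition (source, letter, target). *)
Definition trans := (nat * T * nat)%type.

(* Transition function of a (deterministic) transition list; None = FAIL. *)
Definition delta (tr : seq trans) (k : nat) (c : T) : option nat :=
  ohead [seq t.2 | t <- tr & (t.1.1 == k) && (t.1.2 == c)].

(* Suffix links: None encodes -1. *)
(* The while loop of the construction, step i with letter c:
   while k <> -1 and k has no c-transition, add k -c-> i and k := sl(k);
   returns the new transitions and sl(i), where sl(i) = 0 when the loop
   reaches k = -1 (standard factor oracle).
   Fuel i suffices since sl(k) < k. *)
Fixpoint climb (fuel : nat) (tr : seq trans) (sl : nat -> option nat)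
    (k : option nat) (c : T) (i : nat) : seq trans * option nat :=
  match fuel with
  | 0 => (tr, None)
  | fuel'.+1 =>
    match k with
    | None => (tr, Some 0)
    | Some k0 =>
      match delta tr k0 c with
      | Some t => (tr, Some t)
      | None => climb fuel' ((k0, c, i) :: tr) sl (sl k0) c i
      end
    end
  end.

(* Process letters p_{i+1}, p_{i+2}, ... (ps), i being the current last state. *)
Fixpoint build (ps : seq T) (i : nat) (tr : seq trans) (sl : nat -> option nat)
    : seq trans * (nat -> option nat) :=
  match ps with
  | [::] => (tr, sl)
  | c :: ps' =>
    let tr1 := (i, c, i.+1) :: tr in
    let res := climb i.+1 tr1 sl (sl i) c i.+1 in
    build ps' i.+1 res.1 (fun j => if j == i.+1 then res.2 else sl j)
  end.

(* Transitions of the factor oracle of p (states 0..size p, start 0, sl(0) = -1). *)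
Definition oracle (p : seq T) : seq trans := (build p 0 [::] (fun _ => None)).1.

Fixpoint run (tr : seq trans) (q : nat) (w : seq T) : option nat :=
  match w with
  | [::] => Some q
  | c :: w' => match delta tr q c with
               | None => None
               | Some q' => run tr q' w'
               end
  end.

Fixpoint steps (tr : seq trans) (q : nat) (w : seq T) : nat :=
  match w with
  | [::] => 0
  | c :: w' => match delta tr q c with
               | None => 0
               | Some q' => (steps tr q' w').+1
               end
  end.

Definition FO (S : seq T) : seq trans := oracle (rev S).

Definition inFoc (S x : seq T) : bool := run (FO S) 0 (rev x) != None.

(* Longest suffix of a (possibly empty) lying in Foc(S):
   drop k a for the least k such that drop k a \in Foc(S). *)
Definition repFoc (S a : seq T) : seq T :=
  drop (find (fun k => inFoc S (drop k a)) (iota 0 (size a).+1)) a.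

(* k^S_w : the window w_0..w_{m-1} is read as w_{m-1}, w_{m-2}, ... *)
Definition kBOM (S w : seq T) : nat := steps (FO S) 0 (rev w).

Definition fBOM (S w : seq T) : nat :=
  if w == S then size S else (kBOM S w).+1.

Definition gBOM (S w : seq T) : nat :=
  if w == S then 1 else size S - kBOM S w.

End FactorOracle.

(* The oracle has a transition path spelling S^rev from state 0 (the first
   transition added at step i is i-1 -p_i-> i and transitions are never
   removed), so S^rev is accepted, i.e. k^S_S = m.  Reading a^rev from
   state 0 does not fail exactly on its prefixes of length at most k^S_a,
   so rep_Foc(S)(a) is the suffix of a of length k^S_a.  Hence equal
   representatives force k^S_a = k^S_a'; moreover rep_Foc(S)(a) = S iff
   a = S, since a representative of full length is the word itself. *)

From mathcomp Require Import all_boot.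
From mathcomp Require Import zify.

Set Implicit Arguments.
Unset Strict Implicit.

Lemma find_leq_iota (t n : nat) : t < n -> find (leq t) (iota 0 n) = t.
Proof.
move=> ltn; rewrite -(subnKC (ltnW ltn)) iotaD find_cat size_iota add0n.
have -> : has (leq t) (iota 0 t) = false.
  by apply/hasPn => k; rewrite mem_iota add0n -ltnNge.
have: 0 < n - t by rewrite subn_gt0.
by case: (n - t) => [|d] //= _; rewrite leqnn addn0.
Qed.

Section FactorOracleRuns.
Variable T : finType.
Implicit Types (tr : seq (trans T)) (w p ps S a b : seq T) (c : T).

Lemma delta_cons (s : nat) (c' : T) (t : nat) tr k c :
  delta ((s, c', t) :: tr) k c =
  if (s == k) && (c' == c) then Some t else delta tr k c.
Proof. by rewrite /delta /=; case: ifP. Qed.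

Lemma delta_climb f tr sl (k' : option nat) (c' : T) i k c v :
  delta tr k c = Some v -> delta (climb f tr sl k' c' i).1 k c = Some v.
Proof.
elim: f tr k' => [|f IH] tr [k0|] //= dk.
case dk0: (delta tr k0 c') => [t|] //=.
apply: IH; rewrite delta_cons.
by case: andP => // [[/eqP ek /eqP ec]]; rewrite -ek -ec dk0 in dk.
Qed.

Lemma build_cons c ps i tr sl :
  build (c :: ps) i tr sl =
  let res := climb i.+1 ((i, c, i.+1) :: tr) sl (sl i) c i.+1 in
  build ps i.+1 res.1 (fun j => if j == i.+1 then res.2 else sl j).
Proof. by []. Qed.

Lemma delta_build ps i tr sl j c v :
  j < i -> delta tr j c = Some v -> delta (build ps i tr sl).1 j c = Some v.
Proof.
elim: ps i tr sl => [|d ps IH] i tr sl // lt_ji dj.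
rewrite build_cons; apply: IH; first exact: ltnW.
apply: delta_climb; rewrite delta_cons.
by have -> : (i == j) = false by apply/eqP; lia.
Qed.

Lemma delta_build_next (x0 : T) ps i tr sl n :
  n < size ps -> delta (build ps i tr sl).1 (i + n) (nth x0 ps n) = Some (i + n).+1.
Proof.
elim: ps i tr sl n => [|d ps IH] i tr sl [|n] // lt_n; rewrite build_cons.
  rewrite addn0; apply: delta_build => //.
  by apply: delta_climb; rewrite delta_cons !eqxx.
by rewrite -addSnnS; apply: IH.
Qed.

Lemma run_path tr q w :
  (forall (x0 : T) n, n < size w -> delta tr (q + n) (nth x0 w n) = Some (q + n).+1) ->
  run tr q w = Some (q + size w).
Proof.
elim: w q => [|c w IH] q path /=; first by rewrite addn0.
have := path c 0 isT; rewrite addn0 => /= ->.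
rewrite IH -?addSnnS // => x0 n lt_n.
by rewrite addSnnS; apply: (path x0 n.+1).
Qed.

Lemma run_oracle p : run (oracle p) 0 p = Some (size p).
Proof. by apply: run_path => x0 n; apply: delta_build_next. Qed.

Lemma steps_leq_size tr q w : steps tr q w <= size w.
Proof. by elim: w q => [|c w IH] q //=; case: (delta tr q c). Qed.

Lemma run_take_steps tr q w j :
  j <= size w -> (run tr q (take j w) != None) = (j <= steps tr q w).
Proof.
elim: w q j => [|c w IH] q [|j] //= le_j.
by case: (delta tr q c) => // q'; apply: IH.
Qed.

Lemma kBOM_leq_size S w : kBOM S w <= size w.
Proof. by rewrite /kBOM -(size_rev w) steps_leq_size. Qed.

Lemma inFoc_drop S a k :
  k <= size a -> inFoc S (drop k a) = (size a - kBOM S a <= k).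
Proof.
move=> le_k; rewrite /inFoc rev_drop /kBOM run_take_steps ?size_rev ?leq_subr //; lia.
Qed.

Lemma repFoc_drop S a : repFoc S a = drop (size a - kBOM S a) a.
Proof.
rewrite /repFoc (@eq_in_find _ _ (leq (size a - kBOM S a))) ?find_leq_iota //.
  by rewrite ltnS leq_subr.
by move=> k; rewrite mem_iota add0n ltnS => le_k; apply: inFoc_drop.
Qed.

Lemma size_repFoc S a : size (repFoc S a) = kBOM S a.
Proof. by rewrite repFoc_drop size_drop; have := kBOM_leq_size S a; lia. Qed.

Lemma kBOM_self S : kBOM S S = size S.
Proof.
apply/eqP; rewrite eqn_leq kBOM_leq_size -(size_rev S).
by rewrite -run_take_steps // take_size /FO run_oracle.
Qed.

Lemma repFoc_eq_self S b : size b = size S -> (repFoc S b == S) = (b == S).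
Proof.
move=> size_b; apply/eqP/eqP => [rep_b | ->]; last first.
  by rewrite repFoc_drop kBOM_self subnn drop0.
have k_b : kBOM S b = size b by rewrite -size_repFoc rep_b size_b.
by rewrite -rep_b repFoc_drop k_b subnn drop0.
Qed.

End FactorOracleRuns.

Theorem lemma21 (T : finType) (S a a' : seq T) :
  size a = size S -> size a' = size S ->
  repFoc S a = repFoc S a' ->
  fBOM S a = fBOM S a' /\ gBOM S a = gBOM S a'.
Proof.
move=> size_a size_a' rep_eq.
have k_eq : kBOM S a = kBOM S a' by rewrite -!size_repFoc rep_eq.
have S_eq : (a == S) = (a' == S).
  by rewrite -(repFoc_eq_self size_a) -(repFoc_eq_self size_a') rep_eq.
by rewrite /fBOM /gBOM S_eq k_eq.
Qed.
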